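(* Suppose Assumptions (C1), (C2), (C3) and (CV) hold. If $x\in\mathcal{X}$ is such that $y^*(x)$ is a single point, then $\lim_{t\to0^+}\widetilde\phi_t(x)=\phi(x)$.
   Context: Let $f,g,h_1,\dots,h_k:\mathbb{R}^n\times\mathbb{R}^m\to\mathbb{R}$ and $\mathcal{X}\subseteq\mathbb{R}^n$. For $x\in\mathcal{X}$ let $\mathcal{Y}(x)=\{y: h_i(x,y)\le 0,\ i=1,\dots,k\}$, $y^*(x)=\arg\min_{y\in\mathcal{Y}(x)} g(x,y)$, and $\phi(x)=\min_{y\in y^*(x)} f(x,y)$. For $t>0$ let $\widetilde g_t(x,y)=g(x,y)-t\sum_{i=1}^k\log(-h_i(x,y))$ (defined when all $h_i(x,y)<0$), $y_t^*(x)=\arg\min_y\widetilde g_t(x,y)$ and $\widetilde\phi_t(x)=f(x,y_t^*(x))$. Assumptions: (C1) $f$ is once and $g,h_i$ twice continuously differentiable on the relevant domain; (C2) $\mathcal{X}$ is convex and compact and for every $x\in\mathcal{X}$ there exists $y\in\mathcal{Y}(x)$ with $h_i(x,y)<0$ for all $i\in\{1,\dots,k\}$; (C3) for every $x\in\mathcal{X}$, $\mathcal{Y}(x)$ is compact and $\|y\|\le R$ for all $y\in\mathcal{Y}(x)$; (CV) for every $x$, $g(x,\cdot)$ is convex and each $h_i(x,\cdot)$ is convex, and at least one $h_i(x,\cdot)$ is strongly convex in $y$. *)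

From mathcomp Require Import all_boot all_order all_algebra.
From mathcomp Require Import all_classical all_reals all_analysis.
Import numFieldNormedType.Exports.
Import Order.TTheory GRing.Theory Num.Theory.
Set Implicit Arguments. Unset Strict Implicit. Unset Printing Implicit Defensive.
Local Open Scope ring_scope.
Local Open Scope classical_set_scope.

Section Defs.
Variable R : realType.

Definition C1fun (V : normedModType R) (F : V -> R) : Prop :=
  (forall z, differentiable F z) /\ (forall v : V, continuous (fun z => 'D_v F z)).

Definition C2fun (V : normedModType R) (F : V -> R) : Prop :=
  C1fun F /\ (forall v : V, C1fun (fun z => 'D_v F z)).

Definition enorm (p : nat) (y : 'rV[R]_p) : R := Num.sqrt (\sum_(j < p) y ord0 j ^+ 2).

Definition convex_rVset (p : nat) (A : set 'rV[R]_p) : Prop :=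
  forall a b (l : R), 0 <= l <= 1 -> A a -> A b -> A (l *: a + (1 - l) *: b).

Definition convex_fn (p : nat) (F : 'rV[R]_p -> R) : Prop :=
  forall a b (l : R), 0 <= l <= 1 ->
    F (l *: a + (1 - l) *: b) <= l * F a + (1 - l) * F b.

Definition strongly_convex_fn (p : nat) (F : 'rV[R]_p -> R) : Prop :=
  exists mu : R, 0 < mu /\
  forall a b (l : R), 0 <= l <= 1 ->
    F (l *: a + (1 - l) *: b)
      <= l * F a + (1 - l) * F b - mu / 2 * l * (1 - l) * enorm (a - b) ^+ 2.

Variables (n m k : nat).
Implicit Types (f g : 'rV[R]_n * 'rV[R]_m -> R) (h : 'I_k -> 'rV[R]_n * 'rV[R]_m -> R).

Definition Yset h (x : 'rV[R]_n) : set 'rV[R]_m :=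
  [set y | forall i, h i (x, y) <= 0].

Definition Yint h (x : 'rV[R]_n) : set 'rV[R]_m :=
  [set y | forall i, h i (x, y) < 0].

Definition ystar g h (x : 'rV[R]_n) : set 'rV[R]_m :=
  [set y | Yset h x y /\ forall y', Yset h x y' -> g (x, y) <= g (x, y')].

Definition phi f g h (x : 'rV[R]_n) : R :=
  inf [set f (x, y) | y in ystar g h x].

Definition gtilde g h (t : R) (x : 'rV[R]_n) (y : 'rV[R]_m) : R :=
  g (x, y) - t * \sum_(i < k) ln (- h i (x, y)).

Definition ytstar_set g h (t : R) (x : 'rV[R]_n) : set 'rV[R]_m :=
  [set y | Yint h x y /\ forall y', Yint h x y' -> gtilde g h t x y <= gtilde g h t x y'].

(* the (unique, for t > 0) minimizer, selected by choice *)
Definition ytstar g h (t : R) (x : 'rV[R]_n) : 'rV[R]_m :=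
  xget 0 (ytstar_set g h t x).

Definition phitilde f g h (t : R) (x : 'rV[R]_n) : R := f (x, ytstar g h t x).

End Defs.

From mathcomp Require Import all_boot all_order all_algebra.
From mathcomp Require Import all_classical all_reals all_analysis.
From mathcomp Require Import lra.
Import numFieldNormedType.Exports.
Import Order.TTheory GRing.Theory Num.Theory.
Local Open Scope ring_scope.
Local Open Scope classical_set_scope.

(* For fixed x, Y(x) is compact, so g(x,.) is bounded below on it and the terms
   ln(-h_i(x,.)) are bounded above.  Hence each sublevel set of the barrier
   objective keeps a uniform margin d from the boundary of Y(x), and the
   objective attains its minimum y_t on that compact margin set.
   Convexity and the Slater point give strictly feasible points w whose value
   g(x,w) is arbitrarily close to that of any feasible point; comparing the
   barrier objective at y_t and at w gives g(x,y_t) <= g(x,w) + O(t).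
   As y^*(x) is a single point and Y(x) is compact, near-optimal
   feasible points lie near it, so y_t -> y^*(x); continuity of f(x,.) concludes. *)

Lemma continuous_sumr (R : realType) (T : topologicalType) (k : nat)
    (F : 'I_k -> T -> R) :
  (forall i, continuous (F i)) -> continuous (fun z => \sum_(i < k) F i z).
Proof. by move=> cF; apply: continuous_big => //; exact: add_continuous. Qed.

Lemma C1fun_continuous_section {R : realType} {n m : nat}
    {F : 'rV[R]_n * 'rV[R]_m -> R} (x : 'rV[R]_n) :
  C1fun F -> continuous (fun y => F (x, y)).
Proof.
move=> [dF _] y; apply: differentiable_continuous.
have dpair : differentiable (fun z : 'rV[R]_m => (x, z)) y.
  by apply: differentiable_pair; [exact: differentiable_cst|].
exact: differentiable_comp dpair (dF (x, y)).
Qed.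

Lemma sumr_le_term_bound {R : numDomainType} {k : nat} {a : 'I_k -> R} {L : R} j :
  0 <= L -> (forall i, a i <= L) -> \sum_(i < k) a i <= a j + k%:R * L.
Proof.
move=> L0 aL.
have -> : k%:R * L = \sum_(i < k) L by rewrite sumr_const card_ord mulr_natl.
rewrite (bigD1 j) //= [X in _ <= _ + X](bigD1 j) //= lerD2l -[leLHS]add0r.
by apply: lerD => //; apply: ler_sum.
Qed.

Section LogBarrier.
Context {R : realType} {n m k : nat}.
Context {g : 'rV[R]_n * 'rV[R]_m -> R} {h : 'I_k -> 'rV[R]_n * 'rV[R]_m -> R}.
Context {x : 'rV[R]_n}.
Hypothesis cg : continuous (fun y => g (x, y)).
Hypothesis ch : forall i, continuous (fun y => h i (x, y)).
Hypothesis cY : compact (Yset h x).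
Context {y0 : 'rV[R]_m}.
Hypothesis y0_int : Yint h x y0.

Lemma Yint_Yset {y} : Yint h x y -> Yset h x y.
Proof. by move=> hy i; apply: ltW. Qed.

Let Yset_neq0 : Yset h x !=set0.
Proof. by exists y0; apply: Yint_Yset. Qed.

Lemma Yset_g_lbound : exists gm, forall y, Yset h x y -> gm <= g (x, y).
Proof.
have [c _ cmin] := compact_EVT_min Yset_neq0 cY (continuous_subspaceT cg).
by exists (g (x, c)) => y Yy; apply: cmin; rewrite inE.
Qed.

Lemma Yint_ln_ubound :
  exists2 L, 0 <= L & forall y i, Yint h x y -> ln (- h i (x, y)) <= L.
Proof.
pose P y := \sum_(i < k) `|h i (x, y)|.
have cP : continuous P.
  apply: continuous_sumr => i z.
  exact: continuous_comp (ch i z) (@norm_continuous _ R^o _).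
have [c _ cmax] := compact_EVT_max Yset_neq0 cY (continuous_subspaceT cP).
have M1 : 1 <= Num.max 1 (P c) by rewrite le_max lexx.
exists (ln (Num.max 1 (P c))); first exact: ln_ge0.
move=> y i yi; rewrite ler_ln ?posrE ?oppr_gt0 ?(lt_le_trans ltr01) //.
rewrite le_max; apply/orP; right.
apply: le_trans (cmax y _); last by rewrite inE; apply: Yint_Yset.
rewrite /P (bigD1 i) //= -normrN ler_wpDr ?ler_norm //.
by apply: sumr_ge0.
Qed.

Lemma barrier_sublevel_margin t c : 0 < t ->
  exists2 d, 0 < d & forall y, Yint h x y -> gtilde g h t x y <= c ->
    forall i, d <= - h i (x, y).
Proof.
move=> t0; have [gm gm_le] := Yset_g_lbound.
have [L L0 lnL] := Yint_ln_ubound.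
exists (expR ((gm - c) / t - k%:R * L)); first exact: expR_gt0.
move=> y yi yc i; rewrite -[leRHS]lnK ?posrE ?oppr_gt0 // ler_expR.
rewrite lerBlDr ler_pdivrMr //.
have sumL := sumr_le_term_bound i L0 (fun j => lnL y j yi).
have := gm_le y (Yint_Yset yi); move: yc; rewrite /gtilde.
have : t * \sum_(i < k) ln (- h i (x, y)) <= t * (ln (- h i (x, y)) + k%:R * L).
  by rewrite ler_wpM2l // ltW.
lra.
Qed.

Lemma compact_margin_set d : 0 <= d ->
  compact [set y | forall i, d <= - h i (x, y)].
Proof.
move=> d0; apply: subclosed_compact cY _; last first.
  by move=> y dy i; rewrite -oppr_ge0 (le_trans d0).
have -> : [set y | forall i, d <= - h i (x, y)] =
    \bigcap_(i in [set: 'I_k]) ((fun y => - h i (x, y)) @^-1` [set r | d <= r]).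
  by apply/seteqP; split => [y dy i _|y dy i]; [exact: dy|exact: (dy i I)].
apply: closed_bigI => i _; apply: (proj1 (continuous_closedP _)); last exact: closed_ge.
by move=> y; apply: continuousN; exact: ch.
Qed.

(* Agrees with the barrier objective on the margin set [compact_margin_set d]. *)
Lemma continuous_truncated_barrier t d : 0 < d ->
  continuous (fun y => g (x, y) - t * \sum_(i < k) ln (Num.max (- h i (x, y)) d)).
Proof.
move=> d0.
have csum : continuous (fun y => \sum_(i < k) ln (Num.max (- h i (x, y)) d)).
  apply: continuous_sumr => i y.
  have cmax : {for y, continuous (fun y => Num.max (- h i (x, y)) d)}.
    by apply: continuous_max; [exact: continuousN (ch i y)|exact: cst_continuous].
  by apply: continuous_comp cmax (continuous_ln _); rewrite lt_max d0 orbT.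
by move=> y; exact: cvgB (cg y) (cvgM (cvg_cst t) (csum y)).
Qed.

Lemma ytstar_set_nonempty t : 0 < t -> exists y, ytstar_set g h t x y.
Proof.
move=> t0; pose c := gtilde g h t x y0.
have [d d0 margin] := barrier_sublevel_margin t c t0.
pose S := [set y | forall i, d <= - h i (x, y)].
pose G y := g (x, y) - t * \sum_(i < k) ln (Num.max (- h i (x, y)) d).
have GE y : S y -> G y = gtilde g h t x y.
  by move=> Sy; rewrite /G /gtilde; congr (_ - t * _); apply: eq_bigr => i _; rewrite max_l.
have Sy0 : S y0 by apply: margin.
have [y1 /set_mem Sy1 y1min] := compact_EVT_min (ex_intro _ y0 Sy0)
  (compact_margin_set d (ltW d0)) (continuous_subspaceT (continuous_truncated_barrier t d d0)).
exists y1; split=> [i|y yi]; first by rewrite -oppr_gt0 (lt_le_trans d0).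
rewrite -(GE y1 Sy1); have [yc|cy] := leP (gtilde g h t x y) c.
  have Sy : S y by apply: margin.
  by rewrite -(GE y Sy); apply: y1min; rewrite inE.
apply: le_trans (ltW cy); rewrite /c -(GE y0 Sy0).
by apply: y1min; rewrite inE.
Qed.

Lemma ytstar_spec {t} : 0 < t -> ytstar_set g h t x (ytstar g h t x).
Proof. by move=> t0; apply: xgetPex; exact: ytstar_set_nonempty. Qed.

Hypothesis gcvx : convex_fn (fun y => g (x, y)).
Hypothesis hcvx : forall i, convex_fn (fun y => h i (x, y)).

Lemma Yint_approx_Yset {z eta} : Yset h x z -> 0 < eta ->
  exists2 w, Yint h x w & g (x, w) < g (x, z) + eta.
Proof.
move=> zY eta0; pose a := `|g (x, y0) - g (x, z)| + 1.
have a0 : 0 < a by rewrite ltr_wpDl.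
pose s := Num.min 1 (eta / (2 * a)).
have s0 : 0 < s by rewrite lt_min ltr01 divr_gt0 // mulr_gt0.
have s01 : 0 <= s <= 1 by rewrite ltW //= ge_min lexx.
have sa : s * (2 * a) <= eta by rewrite -ler_pdivlMr ?mulr_gt0 // ge_min lexx orbT.
exists (s *: y0 + (1 - s) *: z).
  move=> i; have := hcvx i y0 z s s01; have := y0_int i; have := zY i.
  move: s01 => /andP[_ s1]; nra.
have := gcvx y0 z s s01.
have : s * (g (x, y0) - g (x, z)) <= s * a.
  by rewrite ler_wpM2l ?ltW // /a; have := ler_norm (g (x, y0) - g (x, z)); lra.
lra.
Qed.

Lemma ytstar_near_optimal {z eta} : Yset h x z -> 0 < eta ->
  \forall t \near 0^'+, g (x, ytstar g h t x) < g (x, z) + eta.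
Proof.
move=> zY eta0; have [w wi gw] := Yint_approx_Yset zY (divr_gt0 eta0 (ltr0Sn _ 1)).
have [L L0 lnL] := Yint_ln_ubound.
pose C := k%:R * L - \sum_(i < k) ln (- h i (x, w)).
have C1 : 0 < 2 * (`|C| + 1) by rewrite mulr_gt0 // ltr_wpDl.
near=> t.
have t0 : 0 < t by near: t; exact: nbhs_right_gt.
have tC : t * (2 * (`|C| + 1)) < eta.
  by rewrite -ltr_pdivlMr //; near: t; apply: nbhs_right_lt; exact: divr_gt0.
have [yti ytmin] := ytstar_spec t0.
have sumL : \sum_(i < k) ln (- h i (x, ytstar g h t x)) <= k%:R * L.
  apply: le_trans (ler_sum _ (fun i _ => lnL _ i yti)) _.
  by rewrite sumr_const card_ord mulr_natl.
have := ytmin w wi; rewrite /gtilde.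
have : t * C <= t * `|C| by rewrite ler_wpM2l ?ler_norm // ltW.
have : t * \sum_(i < k) ln (- h i (x, ytstar g h t x)) <= t * (k%:R * L).
  by rewrite ler_wpM2l // ltW.
rewrite /C; lra.
Unshelve. all: by end_near.
Qed.

Context {ys : 'rV[R]_m}.
Hypothesis ystar_ys : ystar g h x = [set ys].

Let ys_ystar : ystar g h x ys.
Proof. by rewrite ystar_ys. Qed.

Lemma ystar_isolated U : nbhs ys U ->
  exists2 eta, 0 < eta & forall y, Yset h x y -> g (x, y) < g (x, ys) + eta -> U y.
Proof.
move=> Uys; pose K := Yset h x `&` ~` U°.
have [[z Kz]|K0] := pselect (K !=set0); last first.
  exists 1 => // y Yy _; apply: interior_subset; apply: contrapT => nUy.
  by apply: K0; exists y.
have cK : compact K by apply: compact_closedI cY _; rewrite closedC; exact: open_interior.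
have [z' /set_mem[Yz' nUz'] z'min] :=
  compact_EVT_min (ex_intro _ z Kz) cK (continuous_subspaceT cg).
exists (g (x, z') - g (x, ys)).
  rewrite subr_gt0 ltNge; apply/negP => z'ys.
  have : ystar g h x z' by split=> // y Yy; exact: le_trans z'ys (ys_ystar.2 y Yy).
  by rewrite ystar_ys => /= z'E; apply: nUz'; rewrite z'E.
move=> y Yy gy; apply: interior_subset; apply: contrapT => nUy.
by have := z'min y; rewrite inE => /(_ (conj Yy nUy)); lra.
Qed.

Lemma ytstar_cvg : ytstar g h t x @[t --> 0^'+] --> ys.
Proof.
move=> U /ystar_isolated[eta eta0 Ueta].
suff : \forall t \near 0^'+, U (ytstar g h t x) by []; near=> t.
have t0 : 0 < t by near: t; exact: nbhs_right_gt.
apply: Ueta; first exact: Yint_Yset (ytstar_spec t0).1.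
by near: t; exact: ytstar_near_optimal ys_ystar.1 eta0.
Unshelve. all: by end_near.
Qed.

End LogBarrier.

Theorem theorem11 (R : realType) (n m k : nat)
  (f g : 'rV[R]_n * 'rV[R]_m -> R) (h : 'I_k -> 'rV[R]_n * 'rV[R]_m -> R)
  (X : set 'rV[R]_n) (Rb : R) :
  (* (C1) *)
  C1fun f -> C2fun g -> (forall i, C2fun (h i)) ->
  (* (C2) *)
  convex_rVset X -> compact X ->
  (forall x, X x -> exists y, Yset h x y /\ forall i, h i (x, y) < 0) ->
  (* (C3) *)
  (forall x, X x -> compact (Yset h x) /\ forall y, Yset h x y -> enorm y <= Rb) ->
  (* (CV) *)
  (forall x, X x ->
     convex_fn (fun y => g (x, y)) /\
     (forall i, convex_fn (fun y => h i (x, y))) /\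
     exists i, strongly_convex_fn (fun y => h i (x, y))) ->
  forall x, X x -> (exists y0, ystar g h x = [set y0]) ->
  phitilde f g h t x @[t --> 0^'+] --> phi f g h x.
Proof.
move=> f1 [g1 _] h2 _ _ slater Ybounded convex x Xx [ys ystar_ys].
have [y0 [_ y0_int]] := slater x Xx.
have [cY _] := Ybounded x Xx.
have [gcvx [hcvx _]] := convex x Xx.
have -> : phi f g h x = f (x, ys) by rewrite /phi ystar_ys image_set1 inf1.
have ch (i : 'I_k) := C1fun_continuous_section x (h2 i).1.
have := ytstar_cvg (C1fun_continuous_section x g1) ch cY y0_int gcvx hcvx ystar_ys.
exact: continuous_cvg (C1fun_continuous_section x f1 ys).
Qed.
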